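(* In the $K$-tier network model described in the context with $W=0$, let tier $k$ use target SINR $\beta_k>0$ and rate $\mathcal R_k=\log_2(1+\beta_k)$, and define the area network throughput $\mathcal W=\sum_{k=1}^K\lambda_k\mathcal A_k(1-\mathcal O_k^{int})\mathcal R_k$, where $\mathcal O_k^{int}$ is the interference-limited outage probability of tier $k$ with target $\beta_k$. Regarded as a function of the access threshold $\epsilon$ with all other parameters fixed, $\lim_{\epsilon\to\infty}\mathcal W=0$.
   Context: Network model: $\mathcal K=\{1,\dots,K\}$. In $\mathbb R^2$, tier-$k$ BSs form a homogeneous PPP of intensity $\lambda_k>0$ and users a homogeneous PPP of intensity $\lambda_u>0$, all independent. Tier-$k$ BSs have transmit power $P_k>0$, $M_k\in\mathbb N$ antennas, bias $B_k>0$, path-loss exponent $\alpha_k>2$. $\Omega_k=P_kM_kB_k$, $\delta_k=2/\alpha_k$, $\Omega_{j,k}=\Omega_j/\Omega_k$, $\delta_{j,k}=\delta_j/\delta_k$. Access threshold $\epsilon>0$, $R_k=(\Omega_k/\epsilon)^{1/\alpha_k}$. Association: with $D_k$ the distance from a typical user to its nearest tier-$k$ BS, $\hat\rho_k=\Omega_kD_k^{-\alpha_k}$ if $D_k\le R_k$, else $0$; the user is associated with tier $k$ iff $\hat\rho_k>\hat\rho_j$ for all $j\ne k$, with probability $\mathcal T_k=\pi\lambda_k\int_0^{R_k^2}\exp(-\pi\sum_j\lambda_j\Omega_{j,k}^{\delta_j}r^{\delta_{j,k}})dr$. Activation probability of tier $j$: $\mathcal A_j=1-\exp\big(-\pi\lambda_u\int_0^{R_j^2}\exp(-\pi\sum_l\lambda_l\Omega_{l,j}^{\delta_l}r^{\delta_{l,j}})dr\big)$;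 active tier-$j$ BSs are modeled as a homogeneous PPP of intensity $\mathcal A_j\lambda_j$. Outage model: conditional on association with tier $k$, the serving distance $X_k$ has density $\frac{2\pi\lambda_k}{\mathcal T_k}x\exp(-\pi\sum_j\lambda_j\Omega_{j,k}^{\delta_j}x^{2\delta_{j,k}})$ on $(0,R_k]$; given $X_k$, interferers of tier $j$ are the points of independent homogeneous PPPs of intensity $\mathcal A_j\lambda_j$ outside the disk around the user of radius $\Omega_{j,k}^{1/\alpha_j}X_k^{\alpha_k/\alpha_j}$; $\|\mathbf h\|^2\sim\mathrm{Gamma}(M_k,1)$, an interferer of tier $j$ at distance $r$ contributes $P_jVr^{-\alpha_j}$ with $V\sim\mathrm{Exp}(1)$, all independent; $I_o$ is the total interference and $\mathcal O_k^{int}=\mathbb P\{P_k\|\mathbf h\|^2X_k^{-\alpha_k}/I_o<\beta_k\}$. *)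

From HB Require Import structures.
From mathcomp Require Import all_boot all_order all_algebra.
From mathcomp Require Import all_classical all_reals all_analysis.
Set Implicit Arguments. Unset Strict Implicit. Unset Printing Implicit Defensive.
Import Order.TTheory GRing.Theory Num.Theory numFieldNormedType.Exports.
Local Open Scope classical_set_scope.
Local Open Scope ring_scope.

Record netParams (R : realType) (K : nat) := NetParams {
  lam  : 'I_K -> R;      (* BS intensity lambda_k *)
  Pw   : 'I_K -> R;
  Mant : 'I_K -> nat;    (* number of antennas M_k *)
  Bias : 'I_K -> R;
  alp  : 'I_K -> R;      (* path-loss exponent alpha_k *)
  beta : 'I_K -> R;
  lamu : R               (* user intensity lambda_u *)
}.

Section Network.
Variables (R : realType) (K : nat) (p : netParams R K).

Definition Omega (k : 'I_K) : R := Pw p k * (Mant p k)%:R * Bias p k.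
Definition delta (k : 'I_K) : R := 2 / alp p k.
Definition Omega2 (j k : 'I_K) : R := Omega j / Omega k.
Definition delta2 (j k : 'I_K) : R := delta j / delta k.

Definition Rad (eps : R) (k : 'I_K) : R := (Omega k / eps) `^ (alp p k)^-1.

Definition expoTerm (k : 'I_K) (r : R) : R :=
  expR (- (pi * \sum_(j < K) lam p j * (Omega2 j k) `^ (delta j) * r `^ (delta2 j k))).

Definition assocProb (eps : R) (k : 'I_K) : R :=
  pi * lam p k * Rintegral lebesgue_measure [set r | 0 <= r <= Rad eps k ^+ 2] (expoTerm k).

Definition actProb (eps : R) (j : 'I_K) : R :=
  1 - expR (- (pi * lamu p *
     Rintegral lebesgue_measure [set r | 0 <= r <= Rad eps j ^+ 2] (expoTerm j))).

(* density of the serving distance X_k (on (0, R_k]) *)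
Definition servDens (eps : R) (k : 'I_K) (x : R) : R :=
  2 * pi * lam p k / assocProb eps k * x *
  expR (- (pi * \sum_(j < K) lam p j * (Omega2 j k) `^ (delta j) * x `^ (2 * delta2 j k))).

Definition gammaDens (M : nat) (h : R) : R :=
  h ^+ M.-1 * expR (- h) / (M.-1)`!%:R.

(* exclusion radius for tier-j interferers given serving distance x *)
Definition exclRad (k j : 'I_K) (x : R) : R :=
  (Omega2 j k) `^ (alp p j)^-1 * x `^ (alp p k / alp p j).

Definition planeNorm (y : R * R) : R := Num.sqrt (y.1 ^+ 2 + y.2 ^+ 2).

(* contribution of a (location, mark) point z of tier j, given serving distance x *)
Definition contrib (k j : 'I_K) (x : R) (z : (R * R) * R) : R :=
  if exclRad k j x < planeNorm z.1
  then Pw p j * z.2 * planeNorm z.1 `^ (- alp p j) else 0.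

Definition rate (k : 'I_K) : R := ln (1 + beta p k) / ln 2.

Definition poissonPmf (L : R) (n : nat) : R := expR (- L) * L ^+ n / n`!%:R.

End Network.

Local Open Scope ereal_scope.

(* Intensity measure of an independently Exp(1)-marked homogeneous PPP on
   R^2 of intensity c: c * Leb_2 (x) Exp(1) on (R*R)*R. *)
Definition markedIntensity (R : realType) (c : R) (B : set ((R * R) * R)) : \bar R :=
  c%:E * \int[((@lebesgue_measure R) \x (@lebesgue_measure R)) \x (@lebesgue_measure R)]_(z in B `&` [set z | (0 <= z.2)%R])
           (expR (- z.2))%:E.

Section Random.
Variables (R : realType) (d : measure_display) (T : measurableType d).

Definition ptCount (Y : nat -> T -> (R * R) * R) (B : set ((R * R) * R)) (w : T) : \bar R :=
  \sum_(n <oo) (\1_B (Y n w))%:E.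

Definition countEvent (m : nat) (Y : nat -> T -> (R * R) * R)
    (B : 'I_m -> set ((R * R) * R)) (c : 'I_m -> nat) : set T :=
  \bigcap_(i in [set: 'I_m]) [set w | ptCount Y (B i) w = (c i)%:R%:E].

(* Y enumerates a Poisson point process with intensity measure Lam:
   counts in finitely many pairwise disjoint measurable sets of finite
   intensity are independent Poisson variables. *)
Definition isPPP (Pr : probability T R) (Y : nat -> T -> (R * R) * R)
    (Lam : set ((R * R) * R) -> \bar R) : Prop :=
  forall (m : nat) (B : 'I_m -> set ((R * R) * R)) (c : 'I_m -> nat),
    (forall i, measurable (B i)) ->
    (forall i, Lam (B i) < +oo) ->
    (forall i i', i != i' -> B i `&` B i' = set0) ->
    Pr (countEvent Y B c) = \prod_(i < m) (poissonPmf (fine (Lam (B i))) (c i))%:E.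

(* X, H and the point processes Y_1, ..., Y_K are mutually independent
   (product rule on the generating pi-systems of their sigma-algebras). *)
Definition indepModel (K : nat) (Pr : probability T R) (X H : T -> R)
    (Y : 'I_K -> nat -> T -> (R * R) * R) : Prop :=
  forall (m : nat) (A C : set R) (B : 'I_K -> 'I_m -> set ((R * R) * R))
         (c : 'I_K -> 'I_m -> nat),
    measurable A -> measurable C -> (forall j i, measurable (B j i)) ->
    Pr (X @^-1` A `&` H @^-1` C `&` \bigcap_(j in [set: 'I_K]) countEvent (Y j) (B j) (c j))
    = Pr (X @^-1` A) * Pr (H @^-1` C) * \prod_(j < K) Pr (countEvent (Y j) (B j) (c j)).

End Random.

(* O is the interference-limited outage probability of tier k at access
   threshold eps (target SINR beta_k), in the model of the paper:
   X = serving distance with the conditional density on (0, R_k];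
   H = ||h||^2 ~ Gamma(M_k, 1);  Y j = points (location, Exp(1) mark) of a
   marked homogeneous PPP of intensity A_j lambda_j on R^2; the tier-j
   interferers are the points of Y j outside the disk of radius
   Omega_{j,k}^{1/alpha_j} X^{alpha_k/alpha_j}; all independent. *)
Definition isIntOutage (R : realType) (K : nat) (p : netParams R K)
    (eps : R) (k : 'I_K) (O : R) : Prop :=
  exists (d : measure_display) (T : measurableType d) (Pr : probability T R)
         (X H : T -> R) (Y : 'I_K -> nat -> T -> (R * R) * R),
    [/\ measurable_fun setT X /\ measurable_fun setT H /\
          (forall j n, measurable_fun setT (Y j n)),
        (forall A, measurable A ->
           Pr (X @^-1` A) = \int[lebesgue_measure]_(x in A `&` [set x | (0 < x <= Rad p eps k)%R])
                              (servDens p eps k x)%:E) /\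
        (forall A, measurable A ->
           Pr (H @^-1` A) = \int[lebesgue_measure]_(h in A `&` [set h | (0 < h)%R])
                              (gammaDens (Mant p k) h)%:E),
        (forall j n w, (0 <= (Y j n w).2)%R) /\
        (forall j, isPPP Pr (Y j) (markedIntensity (actProb p eps j * lam p j)%R)),
        indepModel Pr X H Y &
        O = fine (Pr [set w | (Pw p k * H w * X w `^ (- alp p k))%:E <
                    (beta p k)%:E * \sum_(j < K) \sum_(n <oo)
                                      (contrib p k j (X w) (Y j n w))%:E])].

Local Close Scope ereal_scope.

Definition throughput (R : realType) (K : nat) (p : netParams R K)
    (O : R -> 'I_K -> R) (eps : R) : R :=
  \sum_(k < K) lam p k * actProb p eps k * (1 - O eps k) * rate p k.

(* The activation probability is A_k = 1 - exp(-pi lambda_u I_k) <= pi lambda_u I_k,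
   where I_k integrates a function with values in [0, 1] over [0, R_k^2]; hence
   A_k <= pi lambda_u R_k^2 with R_k = (Omega_k / eps)^(1 / alpha_k) -> 0.  The
   other factors of the k-th throughput term are bounded (the outage probability
   lies in [0, 1] because the outage event is measurable), so W(eps) is squeezed
   between 0 and a finite sum of multiples of R_k^2. *)
From HB Require Import structures.
From mathcomp Require Import all_boot all_order all_algebra.
From mathcomp Require Import all_classical all_reals all_analysis.
From mathcomp Require Import measurable_realfun lra ring.
Import Order.TTheory GRing.Theory Num.Theory numFieldNormedType.Exports.
Local Open Scope classical_set_scope.
Local Open Scope ring_scope.

Section RealFacts.
Context {R : realType}.

Lemma powR_div_pinfty_cvg0 (c a : R) : 0 < c -> 0 < a ->
  (c / x) `^ a^-1 @[x --> +oo] --> 0.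
Proof.
move=> c0 a0; apply/cvgr0Pnorm_lt => e e0.
have ea0 : 0 < e `^ a by exact: powR_gt0.
near=> x.
have x0 : 0 < x by near: x; apply: nbhs_pinfty_gt; rewrite num_real.
have cx_lt : c / x < e `^ a.
  rewrite ltr_pdivrMr // mulrC -ltr_pdivrMr //.
  by near: x; apply: nbhs_pinfty_gt; rewrite num_real.
rewrite ger0_norm; last exact: powR_ge0.
have := @gt0_ltr_powR _ a^-1 _ (c / x) (e `^ a).
rewrite -powRrM mulfV ?gt_eqF // powRr1 ?(ltW e0) //; apply => //.
- by rewrite invr_gt0.
- by rewrite nnegrE divr_ge0 // ltW.
- by rewrite nnegrE ltW.
Unshelve. all: by end_near. Qed.

Lemma onem_expRN_le (x : R) : 1 - expR (- x) <= x.
Proof. by have := expR_ge1Dx (- x); lra. Qed.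

Lemma Rintegral_cc_bounds (f : R -> R) (a b : R) : a <= b ->
  measurable_fun setT f -> (forall x, a <= x <= b -> 0 <= f x <= 1) ->
  0 <= \int[lebesgue_measure]_(x in [set x | a <= x <= b]) f x <= b - a.
Proof.
move=> ab mf f01; set D := [set x : R | a <= x <= b].
have DE : D = [set` `[a, b]] by apply/seteqP; split => x /=; rewrite in_itv.
have mD : measurable D by rewrite DE.
have f0 x : D x -> 0 <= f x by move=> /f01/andP[].
have int_ge0 : (0 <= \int[lebesgue_measure]_(x in D) (f x)%:E)%E.
  by apply: integral_ge0 => x Dx; rewrite lee_fin f0.
have int_le : (\int[lebesgue_measure]_(x in D) (f x)%:E <= (b - a)%:E)%E.
  apply: (@le_trans _ _ (\int[lebesgue_measure]_(x in D) (cst 1%E) x)%E).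
    apply: ge0_le_integral => //.
    - by apply/measurable_EFinP; exact: measurable_funS mf.
    - by move=> x /f01/andP[_]; rewrite lee_fin.
  rewrite integral_cst // mul1e DE.
  have /= -> := @lebesgue_measure_itv R `[a, b]; rewrite lte_fin.
  by case: ltgtP ab => // ->; rewrite subrr.
apply/andP; split; first exact: Rintegral_ge0.
rewrite /Rintegral -lee_fin fineK // ge0_fin_numE //.
by rewrite (le_lt_trans int_le) // ltry.
Qed.

Lemma probability_fine_bounds d (T : measurableType d) (P : probability T R)
    (A : set T) : measurable A -> 0 <= fine (P A) <= 1.
Proof.
move=> mA; have PA1 := probability_le1 P mA.
have PA0 : (0 <= P A)%E by exact: measure_ge0.
have PAfin : P A \is a fin_num by rewrite ge0_fin_numE // (le_lt_trans PA1) ?ltry.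
by rewrite fine_ge0 //= -lee_fin fineK.
Qed.

Lemma measurable_planeNorm : measurable_fun setT (@planeNorm R).
Proof.
apply: measurableT_comp.
  by apply: continuous_measurable_fun; exact: sqrt_continuous.
by apply: measurable_funD; apply: measurable_funX; [exact: measurable_fst | exact: measurable_snd].
Qed.

End RealFacts.

Section Network.
Context {R : realType} {K : nat} {p : netParams R K}.
Hypothesis lam_ge0 : forall k, 0 <= lam p k.

Lemma measurable_expoTerm k : measurable_fun setT (expoTerm p k).
Proof.
apply: measurableT_comp; first exact: measurable_expR.
apply: measurable_funN; apply: measurable_funM; first exact: measurable_cst.
apply: measurable_sum => j; apply: measurable_funM; first exact: measurable_cst.
exact: measurable_powR.
Qed.

Lemma expoTerm_ge0_le1 k r : 0 <= expoTerm p k r <= 1.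
Proof.
rewrite expR_ge0 expR_le1 oppr_le0 mulr_ge0 ?pi_ge0 // sumr_ge0 // => j _.
by rewrite !mulr_ge0 ?powR_ge0.
Qed.

Lemma actProb_bounds eps k : 0 <= lamu p ->
  0 <= actProb p eps k <= pi * lamu p * Rad p eps k ^+ 2.
Proof.
move=> lamu0; rewrite /actProb; set I := Rintegral _ _ _.
have /andP[I0 I_le] : 0 <= I <= Rad p eps k ^+ 2 - 0.
  apply: Rintegral_cc_bounds => //; first by rewrite sqr_ge0.
    exact: measurable_expoTerm.
  by move=> *; exact: expoTerm_ge0_le1.
rewrite subr_ge0 expR_le1 oppr_le0 !mulr_ge0 ?pi_ge0 //=.
apply: (le_trans (onem_expRN_le _)).
by rewrite ler_wpM2l ?mulr_ge0 ?pi_ge0 // -[leRHS]subr0.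
Qed.

Hypothesis Pw_ge0 : forall k, 0 <= Pw p k.

Lemma contrib_ge0 k j x (z : (R * R) * R) : 0 <= z.2 -> 0 <= contrib p k j x z.
Proof. by move=> z0; rewrite /contrib; case: ifP => // _; rewrite !mulr_ge0 ?powR_ge0. Qed.

Lemma measurable_contrib k j :
  measurable_fun setT (fun q : R * ((R * R) * R) => contrib p k j q.1 q.2).
Proof.
have mnorm : measurable_fun setT (fun q : R * ((R * R) * R) => planeNorm q.2.1).
  exact: measurableT_comp measurable_planeNorm
    (measurableT_comp measurable_fst measurable_snd).
apply: measurable_fun_ifT.
- apply: measurable_fun_ltr mnorm.
  apply: measurable_funM; first exact: measurable_cst.
  exact: measurableT_comp (measurable_powR _) measurable_fst.
- apply: measurable_funM; last exact: measurableT_comp (measurable_powR _) mnorm.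
  apply: measurable_funM; first exact: measurable_cst.
  by apply: measurableT_comp.
- exact: measurable_cst.
Qed.

Lemma isIntOutage_bounds eps k Ok : isIntOutage p eps k Ok -> 0 <= Ok <= 1.
Proof.
move=> [d [T [Pr [X [H [Y [[mX [mH mY]] _ [Y0 _] _ ->]]]]]]].
apply: probability_fine_bounds; rewrite -[X in measurable X]setTI.
apply: measurable_lte => //.
  apply/measurable_EFinP; apply: measurable_funM.
    by apply: measurable_funM => //; exact: measurable_cst.
  exact: measurableT_comp (measurable_powR _) mX.
apply: measurable_funeM; apply: emeasurable_sum => j.
apply: ge0_emeasurable_sum => [n w _ _|n _].
  by rewrite lee_fin contrib_ge0 ?Y0.
apply/measurable_EFinP.
exact: measurableT_comp (measurable_contrib k j) (measurable_fun_pair mX (mY j n)).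
Qed.

Hypothesis lamu_ge0 : 0 <= lamu p.
Hypothesis beta_ge0 : forall k, 0 <= beta p k.

Lemma rate_ge0 k : 0 <= rate p k.
Proof. by rewrite divr_ge0 ?ln_ge0 ?ler1n // lerDl. Qed.

Lemma throughput_bounds Out eps : (forall k, 0 <= Out eps k <= 1) ->
  0 <= throughput p Out eps <=
  \sum_(k < K) lam p k * rate p k * (pi * lamu p) * Rad p eps k ^+ 2.
Proof.
move=> Out01; apply/andP; split.
  apply: sumr_ge0 => k _; have /andP[A0 _] := actProb_bounds eps k lamu_ge0.
  have /andP[_ Out_le1] := Out01 k.
  by rewrite mulr_ge0 ?rate_ge0 // !mulr_ge0 // subr_ge0.
rewrite /throughput; apply: ler_sum => k _.
have /andP[A0 A_le] := actProb_bounds eps k lamu_ge0.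
have /andP[Out_ge0 Out_le1] := Out01 k.
have AO_le : actProb p eps k * (1 - Out eps k) <= pi * lamu p * Rad p eps k ^+ 2.
  by nra.
rewrite [leLHS](_ : _ = lam p k * rate p k * (actProb p eps k * (1 - Out eps k))); last by ring.
rewrite -[leRHS]mulrA; apply: ler_wpM2l AO_le.
exact: mulr_ge0 (lam_ge0 k) (rate_ge0 k).
Qed.

End Network.

Theorem mainTheorem8 (R : realType) (K : nat) (p : netParams R K)
    (O : R -> 'I_K -> R) :
  (forall k, 0 < lam p k) -> (forall k, 0 < Pw p k) -> (forall k, (0 < Mant p k)%N) ->
  (forall k, 0 < Bias p k) -> (forall k, 2 < alp p k) -> (forall k, 0 < beta p k) ->
  0 < lamu p ->
  (forall eps, 0 < eps -> forall k, isIntOutage p eps k (O eps k)) ->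
  throughput p O eps @[eps --> +oo] --> 0.
Proof.
move=> lam0 Pw0 M0 B0 alp2 beta0 lamu0 HO.
have Rad_cvg0 k : Rad p eps k @[eps --> +oo] --> 0.
  apply: powR_div_pinfty_cvg0; last exact: lt_trans (alp2 k).
  by rewrite /Omega !mulr_gt0 ?Pw0 ?ltr0n ?M0 ?B0.
pose c k := lam p k * rate p k * (pi * lamu p).
apply: (@squeeze_cvgr _ _ _ _ (fun=> 0) (fun eps => \sum_(k < K) c k * Rad p eps k ^+ 2)).
- near=> eps.
  have eps0 : 0 < eps by near: eps; apply: nbhs_pinfty_gt; rewrite num_real.
  apply: throughput_bounds => [k||k|k]; try exact: ltW.
  exact: isIntOutage_bounds (fun j => ltW (Pw0 j)) _ _ _ (HO eps eps0 k).
- exact: cvg_cst.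
- rewrite [X in _ --> X](_ : 0 = \sum_(k < K) c k * 0 ^+ 2); last first.
    by rewrite big1 // => k _; rewrite expr0n mulr0.
  apply: cvg_big => [|k _]; first exact: add_continuous.
  apply: cvgM; first exact: cvg_cst.
  by rewrite expr2; under eq_cvg do rewrite expr2; exact: cvgM.
Unshelve. all: by end_near. Qed.
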